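(* Let $\Omega$ be a region of $\mathcal{C}^*_{n,A}$, let $\bm x\in\Omega$ with associated permutation $\pi$, and let $p_\pi(\Omega)$ be the partition of $\pi$ defined below. Then for $i,j\in[n]$, $i$ and $j$ are autonomous with respect to $(P_1,\dots,P_m)$ if and only if $i$ and $j$ lie in the same block of $p_\pi(\Omega)$.
   Context: Let $A=\{a_1,\dots,a_m\}$ with $a_1>\dots>a_m>0$; $\mathcal{C}^*_{n,A}$ is the arrangement in $\mathbb{R}^n$ of hyperplanes $x_i-x_j=a_k$ ($i\ne j$, $1\le k\le m$), and regions are connected components of the complement. The associated permutation of $\bm x$ is the unique $\pi\in\mathfrak{S}_n$ with $x_{\pi(1)}\ge\dots\ge x_{\pi(n)}$ and $\pi^{-1}(i)<\pi^{-1}(j)$ whenever $i<j$ and $x_i=x_j$. For $1\le k\le m$, $P_k$ is the poset on $[n]$ with $i<_{P_k}j$ iff $x_j-x_i>a_k$ (equivalently $[x_i-a_k,x_i]$ lies entirely to the left of $[x_j-a_k,x_j]$); it depends only on $\Omega$. For a poset $P$, $\Lambda_P(i)=\{j:j<_Pi\}$ and $V_P(i)=\{j:i<_Pj\}$; $i,j$ are autonomous with respect to $(P_1,\dots,P_m)$ if $\Lambda_{P_k}(i)=\Lambda_{P_k}(j)$ and $V_{P_k}(i)=V_{P_k}(j)$ for all $k$. Let $M_k$ be the matrix $(\operatorname{sgn}(x_{\pi(s)}-x_{\pi(t)}-a_k))_{s,t\in[n]}$. Call positions $s,t\in[n]$ equivalent if, for every $k$, rows $s$ and $t$ of $M_k$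 have the same number of $+$ entries and columns $s$ and $t$ of $M_k$ have the same number of $+$ entries. The equivalence classes are intervals of consecutive positions; $p_\pi(\Omega)$ is the partition of the word $\pi(1)\pi(2)\cdots\pi(n)$ into the consecutive subwords (blocks) indexed by these classes. *)

From HB Require Import structures.
From mathcomp Require Import all_boot all_order all_fingroup all_algebra.
Set Implicit Arguments. Unset Strict Implicit. Unset Printing Implicit Defensive.
Import Order.TTheory GRing.Theory Num.Theory.
Local Open Scope ring_scope.

Section Defs.
Variables (R : realFieldType) (n m : nat).
Implicit Types (x : 'I_n -> R) (a : 'I_m -> R).

Definition decreasing_pos a : Prop :=
  (forall k l : 'I_m, (k < l)%N -> a l < a k) /\ (forall k, 0 < a k).

Definition in_complement a x : Prop :=
  forall (i j : 'I_n) (k : 'I_m), i != j -> x i - x j != a k.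

Definition assoc_perm x (pi : 'S_n) : Prop :=
  (forall s t : 'I_n, (s <= t)%N -> x (pi t) <= x (pi s)) /\
  (forall i j : 'I_n, (i < j)%N -> x i = x j -> (pi^-1 i < pi^-1 j)%N)%g.

Definition Pk_lt a x (k : 'I_m) (i j : 'I_n) : bool := a k < x j - x i.
Definition Lambda a x k (i : 'I_n) : {set 'I_n} := [set j | Pk_lt a x k j i].
Definition Vset a x k (i : 'I_n) : {set 'I_n} := [set j | Pk_lt a x k i j].

Definition autonomous a x (i j : 'I_n) : Prop :=
  forall k : 'I_m, Lambda a x k i = Lambda a x k j /\ Vset a x k i = Vset a x k j.

Definition Mk a x (pi : 'S_n) (k : 'I_m) : 'M[R]_n :=
  \matrix_(s, t) Num.sg (x (pi s) - x (pi t) - a k).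

Definition row_plus (M : 'M[R]_n) (s : 'I_n) : nat := #|[set t | M s t == 1]|.
Definition col_plus (M : 'M[R]_n) (s : 'I_n) : nat := #|[set u | M u s == 1]|.

Definition pos_equiv a x (pi : 'S_n) (s t : 'I_n) : bool :=
  [forall k : 'I_m,
     (row_plus (Mk a x pi k) s == row_plus (Mk a x pi k) t) &&
     (col_plus (Mk a x pi k) s == col_plus (Mk a x pi k) t)].

Definition p_blocks a x (pi : 'S_n) : {set {set 'I_n}} :=
  [set [set pi t | t in [set t | pos_equiv a x pi s t]] | s : 'I_n].

Definition same_block a x (pi : 'S_n) (i j : 'I_n) : bool :=
  [exists B in p_blocks a x pi, (i \in B) && (j \in B)].

End Defs.

From HB Require Import structures.
From mathcomp Require Import all_boot all_order all_fingroup all_algebra.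
Import Order.TTheory GRing.Theory Num.Theory.
Local Open Scope ring_scope.

(* Row s of M_k has one + entry per element of Lambda_{P_k}(pi s), and column s
   one per element of V_{P_k}(pi s).  Since x_i <= x_j forces
   Lambda(i) \subset Lambda(j) and V(j) \subset V(i), these sets are nested and
   hence determined by their cardinalities: autonomy of i, j is equality of
   these cardinalities for all k, which is exactly equivalence of the
   positions pi^-1 i, pi^-1 j. *)

Section CardProfile.
Variables (R : realFieldType) (n m : nat) (a : 'I_m -> R) (x : 'I_n -> R).

Definition card_profile (i : 'I_n) : {ffun 'I_m -> nat * nat} :=
  [ffun k => (#|Lambda a x k i|, #|Vset a x k i|)].

Lemma Lambda_subset k (i j : 'I_n) :
  x i <= x j -> Lambda a x k i \subset Lambda a x k j.
Proof.
move=> le_ij; apply/subsetP => l; rewrite !inE /Pk_lt => lt_al.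
by apply: (lt_le_trans lt_al); rewrite lerD2r.
Qed.

Lemma Vset_subset k (i j : 'I_n) :
  x i <= x j -> Vset a x k j \subset Vset a x k i.
Proof.
move=> le_ij; apply/subsetP => l; rewrite !inE /Pk_lt => lt_al.
by apply: (lt_le_trans lt_al); rewrite lerD2l lerN2.
Qed.

Lemma autonomousP (i j : 'I_n) :
  autonomous a x i j <-> card_profile i = card_profile j.
Proof.
split=> [auto_ij | /ffunP eq_prof k].
  by apply/ffunP => k; rewrite !ffunE; case: (auto_ij k) => -> ->.
move: (eq_prof k); rewrite !ffunE => -[eqL eqV].
have [le_ij | /ltW le_ji] := lerP (x i) (x j); split; apply/eqP.
- by rewrite eqEcard Lambda_subset //= eqL.
- by rewrite eq_sym eqEcard Vset_subset //= eqV.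
- by rewrite eq_sym eqEcard Lambda_subset //= eqL.
- by rewrite eqEcard Vset_subset //= eqV.
Qed.

Variable pi : 'S_n.

Lemma row_plusE k s : row_plus (Mk a x pi k) s = #|Lambda a x k (pi s)|.
Proof.
rewrite /row_plus -(card_preimset _ (@perm_inj _ pi)); apply: eq_card => t.
by rewrite !inE mxE sgr_cp0 /Pk_lt subr_gt0.
Qed.

Lemma col_plusE k s : col_plus (Mk a x pi k) s = #|Vset a x k (pi s)|.
Proof.
rewrite /col_plus -(card_preimset _ (@perm_inj _ pi)); apply: eq_card => t.
by rewrite !inE mxE sgr_cp0 /Pk_lt subr_gt0.
Qed.

Lemma pos_equivE s t :
  pos_equiv a x pi s t = (card_profile (pi s) == card_profile (pi t)).
Proof.
rewrite /pos_equiv; under eq_forallb => k do rewrite !row_plusE !col_plusE.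
apply/forallP/eqP => [eq_st | /ffunP eq_st k].
  apply/ffunP => k; rewrite !ffunE.
  by case/andP: (eq_st k) => /eqP -> /eqP ->.
by move: (eq_st k); rewrite !ffunE => -[-> ->]; rewrite !eqxx.
Qed.

Lemma same_blockE (i j : 'I_n) :
  same_block a x pi i j = (card_profile i == card_profile j).
Proof.
have blockE s : [set pi t | t in [set t | pos_equiv a x pi s t]] =
                [set u | card_profile (pi s) == card_profile u].
  apply/setP => u; rewrite inE; apply/imsetP/idP => [[t] | eq_su].
    by rewrite inE pos_equivE => /eqP eq_st ->; rewrite eq_st.
  by exists ((pi^-1)%g u); rewrite ?inE ?pos_equivE permKV.
apply/existsP/eqP => [[_ /andP[/imsetP[s _ ->]]] | eq_ij].
  by rewrite !blockE !inE => /andP[/eqP <- /eqP <-].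
exists [set pi t | t in [set t | pos_equiv a x pi ((pi^-1)%g i) t]].
by rewrite imset_f //= blockE !inE permKV eq_ij eqxx.
Qed.

End CardProfile.

Theorem lemma2p4 (R : realFieldType) (n m : nat) (a : 'I_m -> R)
    (x : 'I_n -> R) (pi : 'S_n) :
  decreasing_pos a -> in_complement a x -> assoc_perm x pi ->
  forall i j : 'I_n, autonomous a x i j <-> same_block a x pi i j.
Proof.
(* The equivalence holds for every x. *)
move=> _ _ _ i j.
by rewrite same_blockE; split=> [/autonomousP -> | /eqP/autonomousP].
Qed.
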